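(* Let $\Gamma\subset\mathbb{R}^n$ be a closed $d$-Ahlfors regular set with $d<n-1$, $\Omega=\mathbb{R}^n\setminus\Gamma$, and let $0<\alpha<\alpha'$. Let $u\in W_r(\Omega)$ and suppose $S^{\alpha'}u(q)<\infty$ for $\sigma$-almost every $q\in\Gamma$. Then for every $\lambda>0$ the set $\{q\in\Gamma:S^{\alpha}u(q)>\lambda\}$ is (relatively) open in $\Gamma$.
   Context: $d$-Ahlfors regular: there is $C_0\ge1$ with $C_0^{-1}r^d\le\mathcal{H}^d(B(q,r)\cap\Gamma)\le C_0r^d$. $\delta(X)=\operatorname{dist}(X,\Gamma)$, $\sigma=\mathcal{H}^d|_\Gamma$, $dm(X)=\delta(X)^{d-n+1}dX$, $W_r(\Omega)=\{u\in L^1_{loc}(\Omega):\nabla u\in L^2_{loc}(\Omega,dm)\}$. For $a>0$, $\Gamma^a(q)=\{X\in\Omega:|X-q|<(1+a)\delta(X)\}$ and $S^au(q)=\big(\iint_{\Gamma^a(q)}|\nabla u(X)|^2\delta(X)^{1-d}dm(X)\big)^{1/2}$. *)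

From HB Require Import structures.
From mathcomp Require Import all_boot all_order all_algebra.
From mathcomp Require Import all_classical all_reals all_analysis.
Set Implicit Arguments. Unset Strict Implicit. Unset Printing Implicit Defensive.
Import Order.TTheory GRing.Theory Num.Theory.
Import numFieldNormedType.Exports.
Local Open Scope classical_set_scope.
Local Open Scope ring_scope.

Section Defs.
Variables (R : realType) (n : nat).

(* Points of R^n are row vectors 'rV[R]_n (its library topology is the
   usual one on R^n).  Distances are Euclidean. *)
Definition enorm (x : 'rV[R]_n) : R := Num.sqrt (\sum_(i < n) x 0 i ^+ 2).

Definition eball (q : 'rV[R]_n) (r : R) : set 'rV[R]_n :=
  [set X | enorm (X - q) < r].

Definition distG (G : set 'rV[R]_n) (X : 'rV[R]_n) : R :=
  inf [set enorm (X - y) | y in G].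

Definition ediam (E : set 'rV[R]_n) : R :=
  sup [set enorm (x - y) | x in E & y in E].

(* d-dimensional Hausdorff (outer) measure, unnormalized:
   H^d(A) = sup_{eps>0} inf { sum_k diam(E_k)^d :
                A ⊆ ⋃_k E_k, diam(E_k) <= eps } *)
Definition hcontrib (d : R) (E : set 'rV[R]_n) : R :=
  if E == set0 then 0 else powR (ediam E) d.

Definition hausdorff_eps (d eps : R) (A : set 'rV[R]_n) : \bar R :=
  ereal_inf [set s : \bar R | exists E : nat -> set 'rV[R]_n,
    [/\ A `<=` \bigcup_k E k,
        (forall k x y, E k x -> E k y -> enorm (x - y) <= eps) &
        s = (\sum_(0 <= k <oo) (hcontrib d (E k))%:E)%E]].

Definition hausdorff (d : R) (A : set 'rV[R]_n) : \bar R :=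
  ereal_sup [set hausdorff_eps d eps A | eps in [set e : R | 0 < e]].

Definition ahlfors_regular (d : R) (G : set 'rV[R]_n) : Prop :=
  closed G /\
  exists C0 : R, 1 <= C0 /\
    forall q r, G q -> 0 < r ->
      ((C0^-1 * powR r d)%:E <= hausdorff d (eball q r `&` G))%E /\
      (hausdorff d (eball q r `&` G) <= (C0 * powR r d)%:E)%E.

Definition BorelRn : Type := g_sigma_algebraType (@open 'rV[R]_n).

Definition box (a b : 'rV[R]_n) : set 'rV[R]_n :=
  [set x | forall i, a 0 i <= x 0 i < b 0 i].

(* mu is (the Borel restriction of) n-dimensional Lebesgue measure:
   it gives every box its volume (this determines it uniquely). *)
Definition is_lebesgue_Rn (mu : {measure set BorelRn -> \bar R}) : Prop :=
  forall a b : 'rV[R]_n, (forall i, a 0 i <= b 0 i) ->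
    mu (box a b : set BorelRn) = (\prod_(i < n) (b 0 i - a 0 i))%:E.

Definition ebasis (i : 'I_n) : 'rV[R]_n := delta_mx 0 i.
Definition partial (i : 'I_n) (f : 'rV[R]_n -> R) : 'rV[R]_n -> R :=
  fun x => 'D_(ebasis i) f x.

Fixpoint Ck (k : nat) (f : 'rV[R]_n -> R) : Prop :=
  match k with
  | 0 => continuous f
  | k'.+1 => (forall i x, derivable f x (ebasis i)) /\
             (forall i, Ck k' (partial i f))
  end.

Definition smooth (f : 'rV[R]_n -> R) : Prop := forall k, Ck k f.

Definition test_fun (O : set 'rV[R]_n) (phi : 'rV[R]_n -> R) : Prop :=
  smooth phi /\ exists K, [/\ compact K, K `<=` O & forall x, ~ K x -> phi x = 0].

Definition Omega (G : set 'rV[R]_n) : set 'rV[R]_n := ~` G.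

Definition L1loc (mu : {measure set BorelRn -> \bar R}) (O : set 'rV[R]_n)
  (u : 'rV[R]_n -> R) : Prop :=
  measurable_fun (O : set BorelRn) (u : BorelRn -> R) /\
  forall K : set 'rV[R]_n, compact K -> K `<=` O ->
    (\int[mu]_(x in (K : set BorelRn)) `|(u x)%:E| < +oo)%E.

Definition weak_gradient (mu : {measure set BorelRn -> \bar R})
  (O : set 'rV[R]_n) (u : 'rV[R]_n -> R) (g : 'rV[R]_n -> 'rV[R]_n) : Prop :=
  forall phi, test_fun O phi -> forall i : 'I_n,
    (\int[mu]_(x in (O : set BorelRn)) (u x * partial i phi x)%:E =
     - \int[mu]_(x in (O : set BorelRn)) (g x 0 i * phi x)%:E)%E.

Definition enorm2 (v : 'rV[R]_n) : R := \sum_(i < n) v 0 i ^+ 2.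

(* density of dm = delta^{d-n+1} dX *)
Definition wdens (d : R) (G : set 'rV[R]_n) (X : 'rV[R]_n) : R :=
  powR (distG G X) (d - n%:R + 1).

Definition in_Wr (mu : {measure set BorelRn -> \bar R}) (d : R)
  (G : set 'rV[R]_n) (u : 'rV[R]_n -> R) (g : 'rV[R]_n -> 'rV[R]_n) : Prop :=
  L1loc mu (Omega G) u /\
  (forall i : 'I_n, measurable_fun (Omega G : set BorelRn)
                        ((fun x => g x 0 i) : BorelRn -> R)) /\
  weak_gradient mu (Omega G) u g /\
  forall K : set 'rV[R]_n, compact K -> K `<=` Omega G ->
    (\int[mu]_(x in (K : set BorelRn)) (enorm2 (g x) * wdens d G x)%:E < +oo)%E.

Definition cone (G : set 'rV[R]_n) (a : R) (q : 'rV[R]_n) : set 'rV[R]_n :=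
  [set X | Omega G X /\ enorm (X - q) < (1 + a) * distG G X].

Definition sqfun (mu : {measure set BorelRn -> \bar R}) (d : R)
  (G : set 'rV[R]_n) (g : 'rV[R]_n -> 'rV[R]_n) (a : R) (q : 'rV[R]_n)
  : \bar R :=
  poweR (\int[mu]_(X in (cone G a q : set BorelRn))
           (enorm2 (g X) * powR (distG G X) (1 - d) * wdens d G X)%:E)
        (2^-1).

End Defs.

(* S^a u(q)^2 is the integral of a fixed nonnegative density over the open cone
   Gamma^a(q), which is the increasing union of the cones shrunk by a margin
   1/(k+1); the shrunk cone at q lies inside Gamma^a(q') as soon as
   |q' - q| < 1/(k+1).  If S^a u(q) > lambda, monotone convergence yields a
   shrunk cone already carrying more than lambda^2, so S^a u > lambda on a
   neighbourhood of q in Gamma: S^a u is lower semicontinuous. *)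

From HB Require Import structures.
From mathcomp Require Import all_boot all_order all_algebra.
From mathcomp Require Import all_classical all_reals all_analysis.
From mathcomp Require Import measurable_realfun ring lra.
Set Implicit Arguments. Unset Strict Implicit. Unset Printing Implicit Defensive.
Import Order.TTheory GRing.Theory Num.Theory.
Import numFieldNormedType.Exports.
Import HBNNSimple.
Local Open Scope classical_set_scope.
Local Open Scope ring_scope.

Section EuclideanNorm.
Variables (R : realType) (n : nat).
Implicit Types (u v w q : 'rV[R]_n).

Lemma enorm_ge0 v : 0 <= enorm v.
Proof. exact: sqrtr_ge0. Qed.

Lemma enorm_sqr v : enorm v ^+ 2 = \sum_(i < n) v 0 i ^+ 2.
Proof. by rewrite sqr_sqrtr // sumr_ge0 // => i _; exact: sqr_ge0. Qed.

Lemma enorm0 : enorm (0 : 'rV[R]_n) = 0.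
Proof. by rewrite /enorm big1 ?sqrtr0 // => i _; rewrite mxE expr0n. Qed.

Lemma enorm_eq0 v : enorm v = 0 -> forall i, v 0 i = 0.
Proof.
move=> /(congr1 (fun x => x ^+ 2)); rewrite enorm_sqr expr0n /= => /eqP.
rewrite psumr_eq0 => [/allP v0 i|i _]; last exact: sqr_ge0.
by apply/eqP; rewrite -sqrf_eq0; apply: v0; rewrite mem_index_enum.
Qed.

Lemma enorm_distrC u v : enorm (u - v) = enorm (v - u).
Proof.
by rewrite /enorm; congr Num.sqrt; apply: eq_bigr => i _; rewrite !mxE -sqrrN opprB.
Qed.

Lemma cauchy_schwarz_enorm u v : \sum_(i < n) u 0 i * v 0 i <= enorm u * enorm v.
Proof.
set s := enorm u; set t := enorm v.
have [/eqP|st0] := eqVneq (s * t) 0.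
  rewrite mulf_eq0 => /orP[] /eqP /enorm_eq0 uv0.
    by rewrite big1 ?mulr_ge0 ?enorm_ge0 // => i _; rewrite uv0 mul0r.
  by rewrite big1 ?mulr_ge0 ?enorm_ge0 // => i _; rewrite uv0 mulr0.
have st_gt0 : 0 < s * t by rewrite lt_def st0 mulr_ge0 ?enorm_ge0.
rewrite -(ler_pM2l st_gt0).
(* Sum [2 s t u_i v_i <= t^2 u_i^2 + s^2 v_i^2], i.e. [0 <= (t u_i - s v_i)^2], over [i]. *)
have -> : s * t * (s * t) = 2^-1 * (t ^+ 2 * s ^+ 2 + s ^+ 2 * t ^+ 2) by field.
rewrite {2}/s {3}/t !enorm_sqr !mulr_sumr -big_split /= mulr_sumr.
apply: ler_sum => i _; rewrite -!enorm_sqr -/s -/t.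
have := sqr_ge0 (t * u 0 i - s * v 0 i); nra.
Qed.

Lemma enormD u v : enorm (u + v) <= enorm u + enorm v.
Proof.
rewrite -(ler_pXn2r (_ : 0 < 2)%N) ?nnegrE ?addr_ge0 ?enorm_ge0 //.
have := cauchy_schwarz_enorm u v; rewrite sqrrD !enorm_sqr.
have -> : \sum_(i < n) (u + v) 0 i ^+ 2 = \sum_(i < n) u 0 i ^+ 2 +
    (\sum_(i < n) u 0 i * v 0 i) *+ 2 + \sum_(i < n) v 0 i ^+ 2.
  by rewrite -sumrMnl -!big_split; apply: eq_bigr => i _; rewrite mxE sqrrD.
lra.
Qed.

Lemma enorm_distD u v w : enorm (v - w) <= enorm (v - u) + enorm (u - w).
Proof. by rewrite -[v - w](subrKA u) enormD. Qed.

Lemma near_enorm_lt (X : 'rV[R]_n) (e : R) : 0 < e ->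
  \forall Y \near X, enorm (Y - X) < e.
Proof.
move=> e0; pose c := e / (n%:R + 1).
have c0 : 0 < c by rewrite divr_gt0 // ltr_wpDl.
have : \forall Y \near X, forall i, `|X 0 i - (Y : 'rV[R]_n) 0 i| < c.
  apply: (@filter_forall _ 'I_n (fun i (Y : 'rV[R]_n) => `|X 0 i - Y 0 i| < c)
    (nbhs X)) => i.
  exact: cvgr_dist_lt (@coord_continuous R 1 n 0 i X) _ c0.
apply: filterS => Y Yc.
rewrite -(ltr_pXn2r (_ : 0 < 2)%N) ?nnegrE ?enorm_ge0 ?(ltW e0) // enorm_sqr.
apply: (@le_lt_trans _ _ (\sum_(i < n) c ^+ 2)).
  apply: ler_sum => i _; rewrite !mxE -real_normK ?num_real // distrC.
  by rewrite ler_sqr ?nnegrE ?(ltW c0) // ltW.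
rewrite sumr_const card_ord -mulr_natl /c expr_div_n mulrA.
rewrite ltr_pdivrMr ?exprn_gt0 ?ltr_wpDl // mulrC ltr_pM2l ?exprn_gt0 //.
have : 0 <= (n%:R : R) by []; nra.
Qed.

Lemma open_eball q r : open (eball q r).
Proof.
rewrite openE => X qXr; rewrite /interior.
have gap0 : 0 < r - enorm (X - q) by rewrite subr_gt0.
move: (near_enorm_lt X gap0); apply: filterS => Y YX.
by apply: le_lt_trans (enorm_distD X Y q) _; rewrite -ltrBrDr.
Qed.

Lemma distG_lipschitz (G : set 'rV[R]_n) X Y : G !=set0 ->
  distG G X <= enorm (X - Y) + distG G Y.
Proof.
move=> [y0 Gy0].
have lbd Z : has_lbound [set enorm (Z - y) | y in G].
  by exists 0 => _ [z _ <-]; exact: enorm_ge0.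
rewrite addrC -lerBlDr; apply: lb_le_inf; first by exists (enorm (Y - y0)), y0.
move=> _ [y Gy <-]; rewrite lerBlDr addrC.
by apply: le_trans (enorm_distD Y X y); apply: (ge_inf (lbd X)); exists y.
Qed.

End EuclideanNorm.

Section NonnegIntegral.
Context d (T : measurableType d) (R : realType) (mu : {measure set T -> \bar R}).
Local Open Scope ereal_scope.

Lemma ge0_le_integral_subset (D1 D2 : set T) (f1 f2 : T -> \bar R) :
  D1 `<=` D2 -> (forall x, D2 x -> 0 <= f2 x) ->
  (forall x, D1 x -> 0 <= f1 x <= f2 x) ->
  \int[mu]_(x in D1) f1 x <= \int[mu]_(x in D2) f2 x.
Proof.
move=> D12 f20 f12.
rewrite !ge0_integralE => [||x /f12 /andP[] //]; last exact: f20.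
apply: le_ereal_sup => _ [h hf1 <-]; exists h => //= x.
apply: le_trans (hf1 x) _; rewrite !patchE.
case: ifPn => [/set_mem D1x|_].
  by rewrite mem_set; [case/andP: (f12 x D1x) | exact: D12].
by case: ifPn => [/set_mem /f20|].
Qed.

(* Approximating [f] from below by a simple function makes monotone convergence
   available although [f] need not be measurable. *)
Lemma ge0_nondecreasing_set_integral_gt (C : (set T)^nat) (f : T -> \bar R)
    (l : \bar R) :
  nondecreasing_seq C -> (forall k, measurable (C k)) ->
  (forall x, (\bigcup_k C k) x -> 0 <= f x) ->
  l < \int[mu]_(x in \bigcup_k C k) f x -> exists k, l < \int[mu]_(x in C k) f x.
Proof.
move=> ndC mC f0; rewrite ge0_integralE // => /ereal_sup_gt[_ [h hf <-] lh].
have hf_in x : (\bigcup_k C k) x -> (h x)%:E <= f x.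
  by move=> Cx; have := hf x; rewrite patchE mem_set.
have h0 x : 0 <= (h x)%:E by rewrite lee_fin fun_ge0.
have mh k : measurable_fun (C k) (EFin \o h).
  exact/measurable_EFinP/measurable_funTS/measurable_funPT.
have l_lt_h : l < \int[mu]_(x in \bigcup_k C k) (h x)%:E.
  apply: lt_le_trans lh _; rewrite ge0_integralE => [|x _]; last exact: h0.
  apply: ereal_sup_ubound; exists h => //= x; have := hf x; rewrite !patchE.
  by case: ifPn.
have cvg_h := ge0_nondecreasing_set_cvg_integral (mu := mu) ndC mC mh (fun _ x _ => h0 x).
have [N _ hN] := cvg_h _ (open_ereal_gt' l_lt_h).
exists N; apply: lt_le_trans (hN N (leqnn N)) _.
apply: ge0_le_integral_subset => // x Cx; first by apply: f0; exists N.
by rewrite h0 hf_in //; exists N.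
Qed.

End NonnegIntegral.

Lemma lte_poweR_half (R : realType) (l : R) (I : \bar R) : 0 < l -> (0 <= I)%E ->
  (l%:E < poweR I 2^-1)%E = ((l ^+ 2)%:E < I)%E.
Proof.
move=> l0; case: I => [r||] //= r0; last by rewrite invr_eq0 pnatr_eq0 /= !ltry.
rewrite lee_fin in r0; rewrite !lte_fin powR12_sqrt //.
by rewrite -ltr_sqr ?nnegrE ?sqrtr_ge0 ?(ltW l0) // sqr_sqrtr.
Qed.

Section InnerCones.
Variables (R : realType) (n : nat) (G : set 'rV[R]_n) (a : R).
Implicit Types (q X : 'rV[R]_n) (c : R).

(* Unlike [cone G a q], the cone shrunk by a margin [c] stays inside the cone
   of every vertex in [eball q c]. *)
Definition inner_cone q c : set 'rV[R]_n :=
  [set X | Omega G X /\ enorm (X - q) + c < (1 + a) * distG G X].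

Lemma inner_cone_sub_cone q q' c : eball q c q' -> inner_cone q c `<=` cone G a q'.
Proof.
rewrite /eball /= enorm_distrC => qq' X [OX qX]; split => //.
by apply: le_lt_trans (enorm_distD q X q') _; apply: le_lt_trans qX; rewrite lerD2l ltW.
Qed.

Lemma nondecreasing_inner_cone q :
  nondecreasing_seq (fun k : nat => inner_cone q k.+1%:R^-1).
Proof.
apply/nondecreasing_seqP => k; apply/subsetPset => X [OX qX]; split => //.
by apply: le_lt_trans qX; rewrite lerD2l lef_pV2 ?posrE ?ltr0Sn // ler_nat.
Qed.

Lemma bigcup_inner_cone q : \bigcup_k inner_cone q k.+1%:R^-1 = cone G a q.
Proof.
apply/seteqP; split => [X [k _ [OX qX]]|X [OX qX]].
  by split => //; apply: le_lt_trans qX; rewrite lerDl ltW.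
pose gap := (1 + a) * distG G X - enorm (X - q).
have gap0 : 0 < gap by rewrite subr_gt0.
exists (Num.trunc gap^-1) => //; split => //.
rewrite addrC -ltrBrDr -/gap -[gap]invrK ltf_pV2 ?posrE ?invr_gt0 ?ltr0Sn //.
by rewrite invrK; exact: truncnS_gt.
Qed.

Lemma open_inner_cone q c : closed G -> G !=set0 -> 0 <= a ->
  open (inner_cone q c).
Proof.
move=> Gcl G0 a0; rewrite openE => X [OX qX]; rewrite /interior.
pose gap := (1 + a) * distG G X - enorm (X - q) - c.
have gap0 : 0 < gap by rewrite /gap -addrA -opprD subr_gt0.
have a2 : 0 < 2 + a by rewrite ltr_wpDr.
have OY : \forall Y \near X, Omega G Y.
  by move: (closed_openC Gcl); rewrite openE => /(_ X OX).
near=> Y; split; first by near: Y.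
have YX : (2 + a) * enorm (Y - X) < gap.
  rewrite mulrC -ltr_pdivlMr //; near: Y; exact/near_enorm_lt/divr_gt0.
have qY := enorm_distD X Y q.
have := ler_wpM2l (addr_ge0 ler01 a0) (distG_lipschitz X Y G0).
by rewrite enorm_distrC; move: YX; rewrite /gap; lra.
Unshelve. all: end_near.
Qed.

End InnerCones.

Section ConeIntegral.
Variables (R : realType) (n : nat) (G : set 'rV[R]_n) (a : R).
Variables (mu : {measure set BorelRn R n -> \bar R}) (F : 'rV[R]_n -> \bar R).
Hypotheses (Gcl : closed G) (a0 : 0 <= a) (F0 : forall X, (0 <= F X)%E).
Local Open Scope ereal_scope.

Lemma cone_integral_gt_inner q l : G q ->
  l < \int[mu]_(X in (cone G a q : set (BorelRn R n))) F X ->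
  exists k, l < \int[mu]_(X in (inner_cone G a q k.+1%:R^-1 : set (BorelRn R n))) F X.
Proof.
move=> Gq; rewrite -bigcup_inner_cone => /ge0_nondecreasing_set_integral_gt; apply.
- exact: nondecreasing_inner_cone.
- by move=> k; apply: sub_sigma_algebra; apply: open_inner_cone => //; exists q.
- by move=> X _; exact: F0.
Qed.

Lemma cone_integral_gt_near q q' c l : eball q c q' ->
  l < \int[mu]_(X in (inner_cone G a q c : set (BorelRn R n))) F X ->
  l < \int[mu]_(X in (cone G a q' : set (BorelRn R n))) F X.
Proof.
move=> qq' /lt_le_trans; apply; apply: ge0_le_integral_subset => //.
- exact: inner_cone_sub_cone.
- by move=> X _; rewrite F0 lexx.
Qed.

Lemma open_cone_integral_gt l : exists V, open V /\
  [set q | G q /\ l < \int[mu]_(X in (cone G a q : set (BorelRn R n))) F X] = V `&` G.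
Proof.
pose V := \bigcup_(p in [set p : 'rV[R]_n * nat | G p.1 /\
    l < \int[mu]_(X in (inner_cone G a p.1 p.2.+1%:R^-1 : set (BorelRn R n))) F X])
  eball p.1 p.2.+1%:R^-1.
exists V; split; first by apply: bigcup_open => p _; exact: open_eball.
apply/seteqP; split.
  move=> q [Gq /(cone_integral_gt_inner Gq) [k qk]].
  by split => //; exists (q, k) => //; rewrite /eball /= subrr enorm0 invr_gt0 ltr0Sn.
by move=> q [[p [Gp pk] pq] Gq]; split => //; exact: cone_integral_gt_near pq pk.
Qed.

End ConeIntegral.

Theorem lemma3p6 (R : realType) (n : nat) (d : R)
  (G : set 'rV[R]_n) (mu : {measure set BorelRn R n -> \bar R})
  (alpha alpha' : R) (u : 'rV[R]_n -> R) (g : 'rV[R]_n -> 'rV[R]_n) :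
  is_lebesgue_Rn mu ->
  ahlfors_regular d G ->
  d < n%:R - 1 ->
  0 < alpha -> alpha < alpha' ->
  in_Wr mu d G u g ->
  hausdorff d [set q | G q /\ sqfun mu d G g alpha' q = +oo%E] = 0%E ->
  forall lambda : R, 0 < lambda ->
    exists V : set 'rV[R]_n, open V /\
      [set q | G q /\ (lambda%:E < sqfun mu d G g alpha q)%E] = V `&` G.
Proof.
move=> _ [Gcl _] _ alpha0 _ _ _ lambda lambda0.
have F0 X : (0 <= (enorm2 (g X) * powR (distG G X) (1 - d) * wdens d G X)%:E)%E.
  by rewrite lee_fin !mulr_ge0 ?powR_ge0 // sumr_ge0 // => i _; exact: sqr_ge0.
have [V [oV VG]] := open_cone_integral_gt mu Gcl (ltW alpha0) F0 (lambda ^+ 2)%:E.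
exists V; split => //; rewrite -VG; apply: eq_set => q.
by rewrite /sqfun lte_poweR_half // integral_ge0.
Qed.
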